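(* Let $n\ge1$, $p$ a prime, $0\le i\le j\le n$, $L_0=(p^2\mathbb Z)^i\times(p\mathbb Z)^{j-i}\times\mathbb Z^{n-j}$, and let $B:\mathbb Z^n\to\mathbb C$ be a function such that $\sum_{A\in H_{i,j}\backslash\mathrm{GL}_n(\mathbb Z)}\sum_{\lambda\in L_0}B({}^tA\lambda)$ converges absolutely. Then \[ \sum_{A\in H_{i,j}\backslash\mathrm{GL}_n(\mathbb Z)}\sum_{\lambda\in L_0}B({}^tA\lambda)=a_0\sum_{\lambda\in\mathbb Z^n}B(\lambda)+a_1\sum_{\lambda\in\mathbb Z^n}B(p\lambda)+a_2\sum_{\lambda\in\mathbb Z^n}B(p^2\lambda), \] where $a_0,a_1,a_2$ are integers with $a_0+a_1+a_2=|H_{i,j}\backslash\mathrm{GL}_n(\mathbb Z)|$, $a_0+a_1=|H_{i,j}\backslash S_i|$ and $a_0=|H_{i,j}\backslash S_{i,j}|$.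
   Context: $\delta_{i,j}=\mathrm{diag}(1_i,p1_{j-i},p^21_{n-j})$; $H_{i,j}=\delta_{i,j}\mathrm{GL}_n(\mathbb Z)\delta_{i,j}^{-1}\cap\mathrm{GL}_n(\mathbb Z)$ acting by left multiplication. $S_i$ is the set of $A\in\mathrm{GL}_n(\mathbb Z)$ such that the first $i$ entries of the last row of $A^{-1}$ are divisible by $p$; $S_{i,j}$ is the set of $A\in\mathrm{GL}_n(\mathbb Z)$ such that in the last row of $A^{-1}$ the first $i$ entries are divisible by $p^2$ and the next $j-i$ are divisible by $p$. *)

From Stdlib Require Import ClassicalEpsilon.
From mathcomp Require Import all_boot all_algebra.
From mathcomp Require Import reals complex.
Import GRing.Theory Num.Theory.

Set Implicit Arguments.
Unset Strict Implicit.
Unset Printing Implicit Defensive.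

Local Open Scope ring_scope.

Section Summation.
Variable (R : realType) (T : countType).
Local Open Scope complex_scope.

(* f : T -> C is summable with sum s (limit of finite partial sums along the
   directed set of finite subsets of T) *)
Definition has_sum (f : T -> R[i]) (s : R[i]) : Prop :=
  forall e : R[i], 0 < e -> exists F0 : seq T,
    forall F : seq T, uniq F -> {subset F0 <= F} ->
      `|\sum_(x <- F) f x - s| < e.

Definition abs_summable (f : T -> R[i]) : Prop :=
  exists M : R[i], forall F : seq T, uniq F -> \sum_(x <- F) `|f x| <= M.

Definition summable (f : T -> R[i]) : Prop := exists s, has_sum f s.

(* the value of the sum, (0 by convention if it does not exist) *)
Definition tsum (f : T -> R[i]) : R[i] :=
  match excluded_middle_informative (summable f) with
  | left h => proj1_sig (constructive_indefinite_description _ h)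
  | right _ => 0
  end.
End Summation.

(* ---------- the objects of the paper (with n replaced by n.+1, indices 0-based) ---------- *)
Section Objects.
Variables (n p i j : nat).

Definition delta : 'M[int]_n.+1 :=
  \matrix_(k, l) (if k == l then
                    (if (k < i)%N then 1 else if (k < j)%N then p%:Z else (p ^ 2)%:Z)
                  else 0).

(* GL_n(Z) is  [A \in unitmx]  (det = +-1).
   H_{i,j} = delta GL_n(Z) delta^{-1} \cap GL_n(Z); h = delta g delta^{-1} <-> h delta = delta g *)
Definition inH (h : 'M[int]_n.+1) : Prop :=
  h \in unitmx /\ exists g : 'M[int]_n.+1, g \in unitmx /\ h *m delta = delta *m g.

Definition inS_i (A : 'M[int]_n.+1) : bool :=
  (A \in unitmx) &&
  [forall k : 'I_n.+1, (k < i)%N ==> (p%:Z %| invmx A ord_max k)%Z].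

Definition inS_ij (A : 'M[int]_n.+1) : bool :=
  (A \in unitmx) &&
  [forall k : 'I_n.+1,
     ((k < i)%N ==> ((p ^ 2)%:Z %| invmx A ord_max k)%Z) &&
     ((i <= k < j)%N ==> (p%:Z %| invmx A ord_max k)%Z)].

Definition inL0 (lam : 'cV[int]_n.+1) : bool :=
  [forall k : 'I_n.+1,
     ((k < i)%N ==> ((p ^ 2)%:Z %| lam k ord0)%Z) &&
     ((i <= k < j)%N ==> (p%:Z %| lam k ord0)%Z)].
End Objects.

Arguments delta : clear implicits.
Arguments inH : clear implicits.
Arguments inS_i : clear implicits.
Arguments inS_ij : clear implicits.
Arguments inL0 : clear implicits.

(* Substituting [mu = A^T lambda] turns the double sum into
   [sum_mu c(mu) B(mu)], where [c(mu)] counts the cosets [H A] with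
   [(A^-1)^T mu] in L_0.  By the Smith normal form, [mu = d * G^T e_n] for a
   unimodular [G], and [c(mu)] is then the number of cosets [H A G^-1] for which
   [d] times the last row of [(A G^-1)^-1] lies in L_0.  Right multiplication
   by [G^-1] permutes the cosets, so [c(mu)] only depends on [d]: it is
   [|H\GL_n|] if [p^2 | d], [|H\S_i|] if [p] but not [p^2] divides [d], and
   [|H\S_{i,j}|] otherwise.  Splitting [c(mu)] along [p^2 Z^n < p Z^n < Z^n]
   gives the three sums. *)

From Stdlib Require Import ClassicalEpsilon.
From mathcomp Require Import all_boot all_order all_algebra.
From mathcomp Require Import perm reals complex ring.
From mathcomp Require classical_sets.
Import Order.TTheory GRing.Theory Num.Theory.

Set Implicit Arguments.
Unset Strict Implicit.
Unset Printing Implicit Defensive.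

Local Open Scope ring_scope.

Section Summation.
Variable R : realType.
Local Notation C := R[i].
Local Open Scope complex_scope.

Lemma has_sum_ext (T : countType) (f g : T -> C) s :
  f =1 g -> has_sum f s -> has_sum g s.
Proof.
move=> fg hf e e0; have [F0 HF0] := hf e e0; exists F0 => F uF sF.
by rewrite -(eq_bigr _ (fun x _ => fg x)); apply: HF0.
Qed.

Lemma has_sum_unique (T : countType) (f : T -> C) s t :
  has_sum f s -> has_sum f t -> s = t.
Proof.
move=> hs ht; apply/eqP; apply/negPn/negP => nst.
have e0 : 0 < `|s - t| / 2 by rewrite divr_gt0 // normr_gt0 subr_eq0.
have [F0 H0] := hs _ e0; have [F1 H1] := ht _ e0.
set F := undup (F0 ++ F1).
have s0 : {subset F0 <= F} by move=> x xF; rewrite mem_undup mem_cat xF.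
have s1 : {subset F1 <= F} by move=> x xF; rewrite mem_undup mem_cat xF orbT.
have := H0 F (undup_uniq _) s0; have := H1 F (undup_uniq _) s1.
set S := \sum_(x <- F) f x => h1 h0.
have : `|s - t| < `|s - t| / 2 + `|s - t| / 2.
  rewrite {1}(_ : s - t = (S - t) - (S - s)); last by ring.
  by apply: le_lt_trans (ler_normB _ _) _; apply: ltrD.
by rewrite -splitr ltxx.
Qed.

Lemma has_sum_tsum (T : countType) (f : T -> C) s : has_sum f s -> tsum f = s.
Proof.
move=> hs; rewrite /tsum; case: excluded_middle_informative => [h|[]];
  last by exists s.
by case: constructive_indefinite_description => t /= /has_sum_unique; apply.
Qed.

Lemma has_sum0 (T : countType) : has_sum (fun _ : T => 0 : C) 0.
Proof. by move=> e e0; exists [::] => F _ _; rewrite big1 // subr0 normr0. Qed.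

Lemma has_sumD (T : countType) (f g : T -> C) s t :
  has_sum f s -> has_sum g t -> has_sum (fun x => f x + g x) (s + t).
Proof.
move=> hf hg e e0; have e2 : 0 < e / 2 by rewrite divr_gt0.
have [F0 H0] := hf _ e2; have [F1 H1] := hg _ e2.
exists (F0 ++ F1) => F uF sF.
have s0 : {subset F0 <= F} by move=> x xF; apply: sF; rewrite mem_cat xF.
have s1 : {subset F1 <= F} by move=> x xF; apply: sF; rewrite mem_cat xF orbT.
rewrite big_split /=.
have -> : \sum_(x <- F) f x + \sum_(x <- F) g x - (s + t) =
  (\sum_(x <- F) f x - s) + (\sum_(x <- F) g x - t) by ring.
rewrite [e]splitr; apply: le_lt_trans (ler_normD _ _) _.
by apply: ltrD; [apply: H0 | apply: H1].
Qed.

Lemma has_sumZ (T : countType) (f : T -> C) s c :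
  has_sum f s -> has_sum (fun x => c * f x) (c * s).
Proof.
move=> hf e e0; have e1 : 0 < e / (`|c| + 1) by rewrite divr_gt0 // ltr_pwDr.
have [F0 H0] := hf _ e1; exists F0 => F uF sF.
rewrite -mulr_sumr -mulrBr normrM.
apply: (le_lt_trans (y := (`|c| + 1) * `|\sum_(x <- F) f x - s|)).
  by rewrite ler_wpM2r // lerDl.
by rewrite mulrC -ltr_pdivlMr ?ltr_pwDr //; apply: H0.
Qed.

Lemma has_sum_bij (T U : countType) (h : U -> C) (phi : T -> U) (psi : U -> T) s :
  cancel phi psi -> cancel psi phi -> has_sum (h \o phi) s -> has_sum h s.
Proof.
move=> phiK psiK hf e e0; have [F0 H0] := hf _ e0.
exists (map phi F0) => F uF sF.
have uF' : uniq (map psi F) by rewrite (map_inj_uniq (can_inj psiK)).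
have sF' : {subset F0 <= map psi F}.
  by move=> x xF; rewrite -(phiK x) map_f // sF // map_f.
by have := H0 _ uF' sF'; rewrite big_map; under eq_bigr do rewrite /= psiK.
Qed.

Lemma has_sum_sum_fst (I : finType) (U : countType) (h : I * U -> C) s :
  has_sum h s -> has_sum (fun u => \sum_k h (k, u)) s.
Proof.
move=> hf e e0; have [F0 H0] := hf _ e0.
exists (map snd F0) => G uG sG.
set F := [seq (k, u) | k <- enum I, u <- G].
have uF : uniq F by rewrite allpairs_uniq ?enum_uniq // => -[? ?] [? ?].
have sF : {subset F0 <= F}.
  move=> [k u] kF; apply/allpairsP; exists (k, u) => //=.
  by rewrite mem_enum sG //; apply: (map_f snd kF).
have := H0 _ uF sF; rewrite big_allpairs exchange_big /=.
by under eq_bigr do rewrite big_enum /=.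
Qed.

Lemma has_sum_comp_inj (U V : countType) (g : V -> C) (iota : U -> V)
    (kappa : V -> U) s :
  cancel iota kappa -> (forall y, iota (kappa y) != y -> g y = 0) ->
  has_sum g s -> has_sum (g \o iota) s.
Proof.
move=> iotaK g0 hg e e0; have [F0 H0] := hg _ e0.
exists (map kappa F0) => F uF sF.
set F2 := [seq y <- undup F0 | y \notin map iota F].
have uF' : uniq (map iota F ++ F2).
  rewrite cat_uniq (map_inj_uniq (can_inj iotaK)) uF filter_uniq ?undup_uniq //.
  by rewrite andbT; apply/hasPn => y; rewrite mem_filter => /andP[].
have sF' : {subset F0 <= map iota F ++ F2}.
  move=> y yF; rewrite mem_cat mem_filter mem_undup yF andbT.
  by case: (y \in map iota F).
have := H0 _ uF' sF'; rewrite big_cat big_map /=.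
rewrite [X in _ + X - _]big1_seq ?addr0 // => y /andP[_].
rewrite mem_filter mem_undup => /andP[yF' yF]; apply: g0.
by apply: contraNneq yF' => <-; rewrite map_f // sF // map_f.
Qed.

Lemma has_sum_nonneg (T : countType) (g : T -> R) M :
  (forall x, 0 <= g x) -> (forall F, uniq F -> \sum_(x <- F) g x <= M) ->
  exists s : R, has_sum (fun x => (g x)%:C) s%:C.
Proof.
move=> g0 gM.
pose E := fun y : R => exists2 F, uniq F & y = \sum_(x <- F) g x.
have hE : classical_sets.has_sup E.
  split; first by exists 0, [::]; rewrite ?big_nil.
  by exists M => y [F uF ->]; apply: gM.
exists (sup E) => e; rewrite ltcE => /andP[/eqP eIm e0].
have [_ [F0 u0 ->] hF0] := sup_adherent e0 hE.
exists F0 => F uF sF.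
have le0 : \sum_(x <- F0) g x <= \sum_(x <- F) g x.
  have pF : perm_eq [seq x <- F | x \in F0] F0.
    apply: uniq_perm; rewrite ?filter_uniq // => x.
    by rewrite mem_filter; case: (boolP (x \in F0)) => // xF0; rewrite sF.
  rewrite [X in _ <= X](bigID (mem F0)) /= -[X in _ <= X + _]big_filter.
  by rewrite (perm_big _ pF) lerDl sumr_ge0.
have leE : \sum_(x <- F) g x <= sup E by apply: sup_upper_bound => //; exists F.
rewrite -(raddf_sum (real_complex R)) -raddfB normc_def /= expr0n addr0.
rewrite sqrtr_sqr ltcE eIm eqxx /= ler0_norm ?subr_le0 // opprB ltrBlDr addrC -ltrBlDr.
exact: lt_le_trans hF0 le0.
Qed.

Lemma has_sum_abs_real (T : countType) (g : T -> R) M :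
  (forall F, uniq F -> \sum_(x <- F) `|g x| <= M) ->
  exists s : R, has_sum (fun x => (g x)%:C) s%:C.
Proof.
move=> gM; pose pos (x : R) := Num.max x 0.
have pos_ge0 x : 0 <= pos x by rewrite le_max lexx orbT.
have pos_le x : pos x <= `|x| by rewrite ge_max ler_norm normr_ge0.
have pos_leN x : pos (- x) <= `|x| by rewrite -normrN pos_le.
have pos_sub x : pos x - pos (- x) = x.
  rewrite /pos; case: (leP 0 x) => hx.
    by rewrite max_r ?subr0 // oppr_le0.
  by rewrite max_l ?sub0r ?opprK // oppr_ge0 ltW.
have pos_bound (h : T -> R) : (forall x, pos (h x) <= `|g x|) ->
    forall F, uniq F -> \sum_(x <- F) pos (h x) <= M.
  by move=> hg F uF; apply: le_trans (gM F uF); apply: ler_sum.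
have [s1 h1] := has_sum_nonneg (fun x => pos_ge0 (g x)) (pos_bound _ (fun x => pos_le _)).
have [s2 h2] := has_sum_nonneg (fun x => pos_ge0 (- g x))
  (pos_bound _ (fun x => pos_leN _)).
exists (s1 - s2); rewrite raddfB -mulN1r.
apply: has_sum_ext (has_sumD h1 (has_sumZ (-1) h2)) => x /=.
by rewrite mulN1r -raddfN -raddfD /= pos_sub.
Qed.

Lemma normc_ge_Im (z : C) : `|complex.Im z|%:C <= `|z|.
Proof.
by case: z => a b; simpc; rewrite -sqrtr_sqr ler_wsqrtr // lerDr sqr_ge0.
Qed.

Lemma abs_summable_summable (T : countType) (f : T -> C) :
  abs_summable f -> summable f.
Proof.
move=> [M hM].
have part_bound (part : C -> R) : (forall z, `|part z|%:C <= `|z|) ->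
    forall F, uniq F -> \sum_(x <- F) `|part (f x)| <= complex.Re M.
  move=> hpart F uF.
  have : (\sum_(x <- F) `|part (f x)|)%:C <= M.
    rewrite (raddf_sum (real_complex R)); apply: le_trans (hM F uF).
    by apply: ler_sum => x _; apply: hpart.
  by rewrite lecE => /andP[].
have [s1 h1] := has_sum_abs_real (part_bound _ (@normc_ge_Re R)).
have [s2 h2] := has_sum_abs_real (part_bound _ normc_ge_Im).
exists (s1%:C + 'i * s2%:C); apply: has_sum_ext (has_sumD h1 (has_sumZ 'i h2)).
by move=> x /=; rewrite -complexE.
Qed.

Lemma abs_summable_comp_inj (T U : countType) (f : T -> C) (psi : U -> T) :
  injective psi -> abs_summable f -> abs_summable (f \o psi).
Proof.
move=> ipsi [M hM]; exists M => F uF.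
by rewrite -(big_map psi xpredT (fun y => `|f y|)) hM // map_inj_uniq.
Qed.

Lemma abs_summable_sum_fst (I : finType) (U : countType) (h : I * U -> C) :
  abs_summable h -> abs_summable (fun u => \sum_k `|h (k, u)|).
Proof.
move=> [M hM]; exists M => G uG.
set F := [seq (k, u) | k <- enum I, u <- G].
have uF : uniq F by rewrite allpairs_uniq ?enum_uniq // => -[? ?] [? ?].
apply: le_trans (hM F uF); rewrite big_allpairs exchange_big /=.
apply: ler_sum => u _; rewrite big_enum /= ger0_norm //.
by apply: sumr_ge0 => k _.
Qed.

Lemma abs_summable_le (U : countType) (g h : U -> C) :
  (forall u, `|h u| <= `|g u|) -> abs_summable g -> abs_summable h.
Proof.
move=> hg [M hM]; exists M => F uF; apply: le_trans (hM F uF).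
by apply: ler_sum => u _.
Qed.

Lemma has_sumZ_tsum (T U : countType) (phi : T -> C) (psi : U -> C) (a : int) :
  (forall s, has_sum phi s -> has_sum psi s) -> (a != 0 -> abs_summable phi) ->
  (a != 0 -> summable psi) /\
  has_sum (fun x => a%:~R * phi x) (a%:~R * tsum psi).
Proof.
move=> phi_psi phi_abs; have [->|a0] := eqVneq a 0.
  by split=> //; rewrite mul0r; apply: has_sum_ext (has_sum0 T) => x; rewrite mul0r.
have [s hs] := abs_summable_summable (phi_abs a0).
have hpsi := phi_psi _ hs.
split=> [_|]; first by exists s.
by rewrite (has_sum_tsum hpsi); apply: has_sumZ.
Qed.

End Summation.

Section ColumnDivisibility.
Variable N : nat.

Definition dvd_col (c : int) (v : 'cV[int]_N) := [forall l, (c %| v l ord0)%Z].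

Lemma dvd_col_mulmx c (Y : 'M[int]_N) v : dvd_col c v -> dvd_col c (Y *m v).
Proof.
move=> /forallP cv; apply/forallP => l; rewrite mxE.
by apply: rpred_sum => k _; apply: dvdz_mull.
Qed.

Lemma dvd_col_trans c d v : (c %| d)%Z -> dvd_col d v -> dvd_col c v.
Proof. by move=> cd /forallP dv; apply/forallP => l; apply: dvdz_trans cd (dv l). Qed.

Lemma dvd_colZ c v : dvd_col c (c *: v).
Proof. by apply/forallP => l; rewrite mxE dvdz_mulr. Qed.

End ColumnDivisibility.

Lemma invmxM (R : comUnitRingType) (N : nat) (A B : 'M[R]_N.+1) :
  A \in unitmx -> B \in unitmx -> invmx (A *m B) = invmx B *m invmx A.
Proof. exact: invrM. Qed.

Lemma PoszX (p k : nat) : (p ^ k)%:Z = p%:Z ^+ k.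
Proof. by rewrite -!natz natrX. Qed.

Section PrimeDivisibility.
Variable p : nat.
Hypothesis p_pr : prime p.

Lemma primez_neq0 : p%:Z != 0.
Proof. by rewrite eqz_nat -lt0n prime_gt0. Qed.

Lemma dvdz_p_sqr : (p%:Z %| (p ^ 2)%:Z)%Z.
Proof. by rewrite PoszX dvdz_mulr. Qed.

Lemma dvdz_pexpMl k (d x : int) : ~~ (p%:Z %| d)%Z ->
  ((p ^ k)%:Z %| d * x)%Z = ((p ^ k)%:Z %| x)%Z.
Proof.
move=> pd; rewrite Gauss_dvdzr // PoszX coprimezXl //.
by rewrite coprimezE prime_coprime // dvdzE.
Qed.

Lemma dvdz_sqrMl (d x : int) : (p%:Z %| d)%Z -> ~~ ((p ^ 2)%:Z %| d)%Z ->
  ((p ^ 2)%:Z %| d * x)%Z = (p%:Z %| x)%Z.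
Proof.
move=> pd p2d.
have pd' : ~~ (p%:Z %| (d %/ p)%Z)%Z.
  by apply: contra p2d => pd'; rewrite -(divzK pd) PoszX expr2 dvdz_mul2r ?primez_neq0.
rewrite -(divzK pd) mulrAC PoszX expr2 dvdz_mul2r ?primez_neq0 //.
by have := dvdz_pexpMl 1 x pd'; rewrite expn1.
Qed.

End PrimeDivisibility.

Section Delta.
Variables (n p i j : nat).
Hypothesis p_pr : prime p.
Local Notation M := 'M[int]_n.+1.
Local Notation delta := (delta n p i j).
Local Notation inH := (inH n p i j).
Local Notation inL0 := (inL0 n p i j).

Lemma tr_delta : delta^T = delta.
Proof. by apply/matrixP => k l; rewrite !mxE eq_sym; case: eqP => // ->. Qed.

Lemma delta_mulmx_col (v : 'cV[int]_n.+1) k :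
  (delta *m v) k ord0 = delta k k * v k ord0.
Proof.
rewrite mxE (bigD1 k) //= big1 ?addr0 // => l nlk.
by rewrite mxE eq_sym (negbTE nlk) mul0r.
Qed.

Lemma inL0E v : inL0 v = dvd_col (p ^ 2)%:Z (delta *m v).
Proof.
apply: eq_forallb => k; rewrite delta_mulmx_col mxE eqxx.
case: (ltnP k i) => ki /=; first by rewrite mul1r andbT.
case: (ltnP k j) => kj /=; last by rewrite dvdz_mulr.
by rewrite PoszX expr2 dvdz_mul2l ?primez_neq0.
Qed.

Lemma inH1 : inH 1%:M.
Proof. by split; [rewrite unitmx1 | exists 1%:M; rewrite unitmx1 mulmx1 mul1mx]. Qed.

Lemma inH_mul h1 h2 : inH h1 -> inH h2 -> inH (h1 *m h2).
Proof.
move=> [u1 [g1 [v1 e1]]] [u2 [g2 [v2 e2]]].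
split; first by rewrite unitmx_mul u1.
by exists (g1 *m g2); rewrite unitmx_mul v1 -mulmxA e2 !mulmxA e1.
Qed.

Lemma inH_inv h : inH h -> inH (invmx h).
Proof.
move=> [uh [g [ug e]]]; split; first by rewrite unitmx_inv.
exists (invmx g); split; first by rewrite unitmx_inv.
by rewrite -[LHS](mulmxK ug) -(mulmxA (invmx h)) -e mulKmx.
Qed.

Lemma inL0_trmx_mulmx h v : inH h -> inL0 v -> inL0 (h^T *m v).
Proof.
move=> [_ [g [_ e]]]; rewrite !inL0E => /(dvd_col_mulmx g^T).
have e' : delta *m h^T = g^T *m delta.
  by rewrite -{1}tr_delta -trmx_mul e trmx_mul tr_delta.
by rewrite (mulmxA delta) e' -mulmxA.
Qed.

Lemma inL0_invmx_tr h v : inH h -> inL0 ((invmx h)^T *m v) = inL0 v.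
Proof.
move=> hH; have uh : h \in unitmx by case: hH.
apply/idP/idP => [|/(inL0_trmx_mulmx (inH_inv hH))//].
move/(inL0_trmx_mulmx hH); rewrite mulmxA -trmx_mul.
by rewrite mulVmx // trmx1 mul1mx.
Qed.

End Delta.

Section Cosets.
Variables (n p i j m : nat) (reps : 'I_m -> 'M[int]_n.+1).
Local Notation M := 'M[int]_n.+1.
Local Notation inH := (inH n p i j).
Hypothesis reps_unit : forall k, reps k \in unitmx.
Hypothesis reps_transversal : forall A : M, A \in unitmx ->
  exists! k : 'I_m, inH (A *m invmx (reps k)).

Lemma reps_inj k k' : inH (reps k *m invmx (reps k')) -> k = k'.
Proof.
have [k0 [_ k0_uniq]] := reps_transversal (reps_unit k).
move=> hkk'; rewrite -(k0_uniq k') // -(k0_uniq k) //.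
by rewrite mulmxV //; apply: inH1.
Qed.

Lemma coset_perm (G : M) : G \in unitmx ->
  exists2 s : 'I_m -> 'I_m, injective s &
    forall k, inH (reps k *m invmx G *m invmx (reps (s k))).
Proof.
move=> uG; have /fin_all_exists[s hs] k : exists k',
    inH (reps k *m invmx G *m invmx (reps k')).
  have uk : reps k *m invmx G \in unitmx by rewrite unitmx_mul reps_unit unitmx_inv.
  by have [k' [hk' _]] := reps_transversal uk; exists k'.
exists s => // k1 k2 e; apply: reps_inj.
have := inH_mul (hs k1) (inH_inv (hs k2)).
rewrite e !invmxM ?unitmx_mul ?reps_unit ?unitmx_inv // !invmxK.
by rewrite !mulmxA mulmxKV ?reps_unit // mulmxKV.
Qed.

Lemma card_reps_mulmx (P : pred M) (G : M) : G \in unitmx ->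
  (forall h A, inH h -> A \in unitmx -> P (h *m A) = P A) ->
  #|[set k | P (reps k *m invmx G)]| = #|[set k | P (reps k)]|.
Proof.
move=> uG P_inv; have [s s_inj hs] := coset_perm uG.
rewrite -[RHS](card_preimset _ s_inj); apply: eq_card => k; rewrite !inE.
by rewrite -(mulmxKV (reps_unit (s k)) (reps k *m invmx G)) P_inv.
Qed.

End Cosets.

Section UnimodularColumns.
Variable N : nat.
Local Notation M := 'M[int]_N.+1.

Definition e_last : 'cV[int]_N.+1 := delta_mx ord_max ord0.

Lemma mulmx_scale_e_last (X : M) d l : (X *m (d *: e_last)) l ord0 = d * X l ord_max.
Proof.
rewrite mxE (bigD1 ord_max) //= big1 ?addr0 => [|k /negbTE nk].
  by rewrite !mxE !eqxx mulr1 mulrC.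
by rewrite !mxE nk mulr0 mulr0.
Qed.

(* From the Smith normal form of the row [mu^T]: [mu^T = L * diag(d) * R]
   with [L] a 1x1 unit, so [mu] is [d] times the first row of [R]. *)
Lemma col_unimodular_decomposition (mu : 'cV[int]_N.+1) :
  exists d (G : M), G \in unitmx /\ mu = G^T *m (d *: e_last).
Proof.
have [L uL [R uR [dd _ E]]] := int_Smith_normal_form (mu^T).
exists (L ord0 ord0 * dd`_0), (xrow ord0 ord_max R); split.
  by rewrite xrowE unitmx_mul uR andbT unitmx_perm.
apply/matrixP => l z; rewrite (ord1 z) mulmx_scale_e_last.
have -> : mu l ord0 = (mu^T) ord0 l by rewrite mxE.
have -> : (xrow ord0 ord_max R)^T l ord_max = R ord0 l.
  by rewrite mxE /xrow /row_perm mxE tpermR.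
rewrite E mxE (bigD1 ord0) //= big1 ?addr0 => [|b nb].
  by rewrite mxE big_ord1 mxE eqxx mulr1n.
rewrite mxE big_ord1 mxE; case: eqP => [e|_]; last by rewrite mulr0n mulr0 mul0r.
by move: nb; rewrite -val_eqE /= -e eqxx.
Qed.

Lemma unitmx_row_ndvd (p : nat) (G : M) r : prime p -> G \in unitmx ->
  exists l, ~~ (p%:Z %| G r l)%Z.
Proof.
move=> p_pr uG; apply/existsP; apply: contraTT uG; rewrite negb_exists => /forallP pG.
have pdet : (p%:Z %| \det G)%Z.
  rewrite (expand_det_row _ r); apply: rpred_sum => l _.
  by apply: dvdz_mulr; move: (pG l); rewrite negbK.
rewrite unitmxE; apply/negP => /orP[] /eqP e; move: pdet;
  by rewrite e dvdzE /= dvdn1 => /eqP p1; rewrite p1 in p_pr.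
Qed.

Lemma dvd_col_unimodular (p k : nat) (G : M) d : prime p -> G \in unitmx ->
  dvd_col (p ^ k)%:Z (G^T *m (d *: e_last)) = ((p ^ k)%:Z %| d)%Z.
Proof.
move=> p_pr uG; apply/forallP/idP => [pd|pd l]; last first.
  by rewrite mulmx_scale_e_last dvdz_mulr.
have [l pG] := unitmx_row_ndvd ord_max p_pr uG.
by move: (pd l); rewrite mulmx_scale_e_last mxE mulrC dvdz_pexpMl.
Qed.

End UnimodularColumns.

Section CosetCount.
Variables (n p i j m : nat) (reps : 'I_m -> 'M[int]_n.+1).
Local Notation M := 'M[int]_n.+1.
Local Notation inH := (inH n p i j).
Local Notation inL0 := (inL0 n p i j).
Hypothesis p_pr : prime p.
Hypothesis reps_unit : forall k, reps k \in unitmx.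
Hypothesis reps_transversal : forall A : M, A \in unitmx ->
  exists! k : 'I_m, inH (A *m invmx (reps k)).

(* Whether [(A^-1)^T (d e_n)] lies in L_0 only depends on the last row of [A^-1]. *)
Definition inL0_last (d : int) (A : M) := inL0 ((invmx A)^T *m (d *: e_last n)).

Lemma inL0_last_mulmx d h A : inH h -> A \in unitmx ->
  inL0_last d (h *m A) = inL0_last d A.
Proof.
move=> hH uA; have uh : h \in unitmx by case: hH.
by rewrite /inL0_last invmxM // trmx_mul -mulmxA [LHS]inL0_invmx_tr.
Qed.

Lemma inL0_last_sqr d A : ((p ^ 2)%:Z %| d)%Z -> inL0_last d A.
Proof.
move=> p2d; apply/forallP => l; rewrite mulmx_scale_e_last.
by rewrite !dvdz_mulr ?implybT // (dvdz_trans (dvdz_p_sqr p)).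
Qed.

Lemma inL0_last_S_i d A : A \in unitmx -> (p%:Z %| d)%Z -> ~~ ((p ^ 2)%:Z %| d)%Z ->
  inL0_last d A = inS_i n p i A.
Proof.
move=> uA pd p2d; rewrite /inS_i uA; apply: eq_forallb => l.
by rewrite mulmx_scale_e_last mxE (dvdz_mulr _ pd) implybT andbT dvdz_sqrMl.
Qed.

Lemma inL0_last_S_ij d A : A \in unitmx -> ~~ (p%:Z %| d)%Z ->
  inL0_last d A = inS_ij n p i j A.
Proof.
move=> uA pd; rewrite /inS_ij uA; apply: eq_forallb => l.
by rewrite mulmx_scale_e_last mxE !dvdz_pexpMl // -[p%:Z]/((p ^ 1)%:Z) dvdz_pexpMl.
Qed.

Definition coset_count (mu : 'cV[int]_n.+1) :=
  #|[set k | inL0 ((invmx (reps k))^T *m mu)]|.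

Lemma coset_countE mu : coset_count mu =
  if dvd_col (p ^ 2)%:Z mu then m
  else if dvd_col p%:Z mu then #|[set k | inS_i n p i (reps k)]|
  else #|[set k | inS_ij n p i j (reps k)]|.
Proof.
have [d [G [uG ->]]] := col_unimodular_decomposition mu.
have -> : coset_count (G^T *m (d *: e_last n)) =
    #|[set k | inL0_last d (reps k *m invmx G)]|.
  apply: eq_card => k; rewrite !inE /inL0_last.
  by rewrite invmxM ?unitmx_inv // invmxK trmx_mul mulmxA.
rewrite (card_reps_mulmx reps_unit reps_transversal uG); last first.
  by move=> h A hH uA; apply: inL0_last_mulmx.
rewrite !dvd_col_unimodular // -[p%:Z]/((p ^ 1)%:Z) dvd_col_unimodular //.
case: ifP => p2d.
  by rewrite -[RHS]card_ord -cardsT; apply: eq_card => k; rewrite !inE inL0_last_sqr.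
case: ifP => pd; apply: eq_card => k; rewrite !inE.
  by rewrite inL0_last_S_i ?p2d.
by rewrite inL0_last_S_ij ?pd.
Qed.

End CosetCount.

Lemma inS_ij_S_i n p i j (A : 'M[int]_n.+1) : inS_ij n p i j A -> inS_i n p i A.
Proof.
rewrite /inS_ij /inS_i => /andP[-> /forallP pA]; apply/forallP => l.
case/andP: (pA l) => /implyP p2A _; apply/implyP => li.
by apply: dvdz_trans (p2A li); rewrite PoszX dvdz_mulr.
Qed.

Section DivisibleRestriction.
Variables (R : realType) (N : nat) (B : 'cV[int]_N -> R[i]).

Definition dvd_part (c : int) (mu : 'cV[int]_N) := if dvd_col c mu then B mu else 0.

Lemma has_sum_dvd_part c : c != 0 -> forall s,
  has_sum (dvd_part c) s -> has_sum (fun lam : 'cV[int]_N => B (c *: lam)) s.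
Proof.
move=> c0 s hs.
have cK : cancel (fun lam : 'cV[int]_N => c *: lam)
                 (fun mu => \col_l (mu l ord0 %/ c)%Z).
  by move=> lam; apply/matrixP => l z; rewrite (ord1 z) !mxE mulKz.
have off_image (mu : 'cV[int]_N) : c *: (\col_l (mu l ord0 %/ c)%Z) != mu -> dvd_part c mu = 0.
  rewrite /dvd_part; case: ifP => // /forallP cmu; case/eqP.
  by apply/matrixP => l z; rewrite (ord1 z) !mxE mulrC divzK.
apply: has_sum_ext (has_sum_comp_inj cK off_image hs) => lam.
by rewrite /= /dvd_part dvd_colZ.
Qed.

End DivisibleRestriction.

Section Decomposition.
Variables (R : realType) (n p i j m : nat) (reps : 'I_m -> 'M[int]_n.+1).
Variable B : 'cV[int]_n.+1 -> R[i].
Hypothesis p_pr : prime p.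
Hypothesis reps_unit : forall k, reps k \in unitmx.
Hypothesis reps_transversal : forall A : 'M[int]_n.+1, A \in unitmx ->
  exists! k : 'I_m, inH n p i j (A *m invmx (reps k)).

Local Notation inL0 := (inL0 n p i j).
Local Notation count := (coset_count p i j reps).
Local Notation S_i := #|[set k : 'I_m | inS_i n p i (reps k)]|.
Local Notation S_ij := #|[set k : 'I_m | inS_ij n p i j (reps k)]|.
Local Notation f := (fun x : 'I_m * 'cV[int]_n.+1 =>
  if inL0 x.2 then B ((reps x.1)^T *m x.2) else 0).

Let shear (x : 'I_m * 'cV[int]_n.+1) := (x.1, (reps x.1)^T *m x.2).
Let unshear (x : 'I_m * 'cV[int]_n.+1) := (x.1, (invmx (reps x.1))^T *m x.2).

Let shearK : cancel shear unshear.
Proof.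
move=> [k v]; congr pair; rewrite /= mulmxA -trmx_mul.
by rewrite mulmxV ?trmx1 ?mul1mx.
Qed.

Let unshearK : cancel unshear shear.
Proof.
move=> [k v]; congr pair; rewrite /= mulmxA -trmx_mul.
by rewrite mulVmx ?trmx1 ?mul1mx.
Qed.

Let sum_unshear mu : \sum_k f (unshear (k, mu)) = (count mu)%:R * B mu.
Proof.
rewrite -big_mkcond /= (eq_bigr (fun _ => B mu)) => [|k _]; last first.
  by rewrite mulmxA -trmx_mul mulVmx ?trmx1 ?mul1mx.
rewrite sumr_const mulr_natl; congr (_ *+ _).
by apply: eq_card => k; rewrite inE.
Qed.

Lemma has_sum_coset_count s :
  has_sum f s -> has_sum (fun mu => (count mu)%:R * B mu) s.
Proof.
move=> hf; have : has_sum (f \o unshear) s.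
  apply: (has_sum_bij shearK unshearK); apply: has_sum_ext hf => x.
  by rewrite /comp shearK.
by move/has_sum_sum_fst; apply: has_sum_ext => mu; apply: sum_unshear.
Qed.

Lemma abs_summable_coset_count :
  abs_summable f -> abs_summable (fun mu => (count mu)%:R * B mu).
Proof.
move=> /(abs_summable_comp_inj (can_inj unshearK))/abs_summable_sum_fst.
apply: abs_summable_le => mu; rewrite -sum_unshear /=.
by rewrite [X in _ <= X]ger0_norm ?sumr_ge0 // ler_norm_sum.
Qed.

Lemma abs_summable_supported (g : 'cV[int]_n.+1 -> R[i]) : abs_summable f ->
  (forall mu, g mu != 0 -> g mu = B mu /\ (0 < count mu)%N) -> abs_summable g.
Proof.
move=> /abs_summable_coset_count cnt_abs gB; apply: abs_summable_le cnt_abs => mu.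
have [->|/gB[-> c0]] := eqVneq (g mu) 0; first by rewrite normr0.
by rewrite normrM ler_peMl // ger0_norm ?ler1n.
Qed.

Lemma leq_card_S_ij_S_i : (S_ij <= S_i)%N.
Proof. by apply: subset_leq_card; apply/subsetP => k; rewrite !inE; apply: inS_ij_S_i. Qed.

Lemma leq_card_S_i : (S_i <= m)%N.
Proof. by rewrite -[leqRHS]card_ord max_card. Qed.

Lemma m_gt0 : (0 < m)%N.
Proof. by have [k _] := reps_transversal (unitmx1 _ _); apply: leq_ltn_trans (ltn_ord k). Qed.

Let countE := coset_countE p_pr reps_unit reps_transversal.

Lemma leq_card_S_ij_coset_count mu : (S_ij <= count mu)%N.
Proof.
rewrite countE; case: ifP => _; last by case: ifP => // _; apply: leq_card_S_ij_S_i.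
exact: leq_trans leq_card_S_ij_S_i leq_card_S_i.
Qed.

Lemma leq_card_S_i_coset_count mu : dvd_col p mu -> (S_i <= count mu)%N.
Proof. by move=> pmu; rewrite countE pmu; case: ifP => // _; apply: leq_card_S_i. Qed.

Lemma coset_count_sqr mu : dvd_col (p ^ 2)%:Z mu -> count mu = m.
Proof. by move=> p2mu; rewrite countE p2mu. Qed.

Lemma abs_summable_B : abs_summable f -> S_ij%:Z != 0 -> abs_summable B.
Proof.
rewrite eqz_nat -lt0n => f_abs S_ij0.
apply: abs_summable_supported => // mu _; split=> //.
exact: leq_trans S_ij0 (leq_card_S_ij_coset_count mu).
Qed.

Lemma abs_summable_dvd_part_p :
  abs_summable f -> S_i%:Z - S_ij%:Z != 0 -> abs_summable (dvd_part B p%:Z).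
Proof.
rewrite subr_eq0 eqz_nat => f_abs S_i_ij.
have S_i0 : (0 < S_i)%N.
  by apply: leq_ltn_trans (leq0n S_ij) _; rewrite ltn_neqAle eq_sym S_i_ij leq_card_S_ij_S_i.
apply: abs_summable_supported => // mu; rewrite /dvd_part.
case: ifP => [pmu _|_]; last by rewrite eqxx.
by split=> //; apply: leq_trans S_i0 (leq_card_S_i_coset_count pmu).
Qed.

Lemma abs_summable_dvd_part_sqr :
  abs_summable f -> abs_summable (dvd_part B (p ^ 2)%:Z).
Proof.
move=> f_abs; apply: abs_summable_supported => // mu; rewrite /dvd_part.
case: ifP => [p2mu _|_]; last by rewrite eqxx.
by rewrite coset_count_sqr // m_gt0.
Qed.

Lemma coset_count_split mu :
  S_ij%:~R * B mu + (S_i%:Z - S_ij%:Z)%:~R * dvd_part B p%:Z mu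
    + (m%:Z - S_i%:Z)%:~R * dvd_part B (p ^ 2)%:Z mu = (count mu)%:R * B mu.
Proof.
rewrite countE /dvd_part !intrB.
have [p2mu|_] := boolP (dvd_col (p ^ 2)%:Z mu).
  by rewrite (dvd_col_trans (dvdz_p_sqr p) p2mu); ring.
by case: (dvd_col p%:Z mu); ring.
Qed.

End Decomposition.

Theorem lemma3p7 (R : realType) (n p i j m : nat)
    (reps : 'I_m -> 'M[int]_n.+1) (B : 'cV[int]_n.+1 -> R[i]) :
  prime p -> (i <= j <= n.+1)%N ->
  (forall k : 'I_m, reps k \in unitmx) ->
  (forall A : 'M[int]_n.+1, A \in unitmx ->
     exists! k : 'I_m, inH n p i j (A *m invmx (reps k))) ->
  abs_summable (fun x : 'I_m * 'cV[int]_n.+1 =>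
     if inL0 n p i j x.2 then B ((reps x.1)^T *m x.2) else 0) ->
  exists a0 a1 a2 : int,
    [/\ a0 + a1 + a2 = m%:Z,
        a0 + a1 = #|[set k : 'I_m | inS_i n p i (reps k)]|%:Z,
        a0 = #|[set k : 'I_m | inS_ij n p i j (reps k)]|%:Z,
        [/\ (a0 != 0 -> summable B),
        (a1 != 0 -> summable (fun lam : 'cV[int]_n.+1 => B (p%:Z *: lam))) &
        (a2 != 0 -> summable (fun lam : 'cV[int]_n.+1 => B ((p ^ 2)%:Z *: lam)))] &
        has_sum (fun x : 'I_m * 'cV[int]_n.+1 =>
                   if inL0 n p i j x.2 then B ((reps x.1)^T *m x.2) else 0)
          (a0%:~R * tsum B
           + a1%:~R * tsum (fun lam : 'cV[int]_n.+1 => B (p%:Z *: lam))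
           + a2%:~R * tsum (fun lam : 'cV[int]_n.+1 => B ((p ^ 2)%:Z *: lam)))].
Proof.
move=> p_pr _ reps_unit reps_transversal f_abs.
set S_i := #|_|; set S_ij := #|_|.
have p0 := primez_neq0 p_pr.
have p2_0 : (p ^ 2)%:Z != 0 by rewrite PoszX expf_neq0.
have [B_sum B_has] := has_sumZ_tsum (a := S_ij%:Z) (fun _ => id)
  (abs_summable_B p_pr reps_unit reps_transversal f_abs).
have [Bp_sum Bp_has] := has_sumZ_tsum (a := S_i%:Z - S_ij%:Z) (has_sum_dvd_part (B := B) p0)
  (abs_summable_dvd_part_p p_pr reps_unit reps_transversal f_abs).
have [Bp2_sum Bp2_has] := has_sumZ_tsum (a := m%:Z - S_i%:Z) (has_sum_dvd_part (B := B) p2_0)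
  (fun _ => abs_summable_dvd_part_sqr p_pr reps_unit reps_transversal f_abs).
exists S_ij%:Z, (S_i%:Z - S_ij%:Z), (m%:Z - S_i%:Z); split=> //; rewrite ?subrKC //.
have [s f_has] := abs_summable_summable f_abs.
have := has_sum_ext (coset_count_split B p_pr reps_unit reps_transversal)
  (has_sumD (has_sumD B_has Bp_has) Bp2_has).
by move/(has_sum_unique (has_sum_coset_count reps_unit f_has)) <-.
Qed.
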